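(* Let $\mathcal{P}$ be a finite poset with $p$ elements. The order cone $\mathcal{C}(\mathcal{P})\subset\mathbb{R}^{\mathcal{P}}\cong\mathbb{R}^p$ is simplicial if and only if the Hasse diagram of $\mathcal{P}$ does not contain any collider.
   Context: For a finite poset $\mathcal{P}$, $\mathbb{R}^{\mathcal{P}}$ is the space of real functions on $\mathcal{P}$. The order cone $\mathcal{C}(\mathcal{P})$ is the set of all $\mathbf{f}\in\mathbb{R}^{\mathcal{P}}$ with $f_x\ge 0$ for all $x\in\mathcal{P}$ and $f_x\le f_y$ whenever $x\preceq y$. An element $y$ covers $x$, written $x\lessdot y$, if $x\prec y$ and there is no $z$ with $x\prec z\prec y$. The Hasse diagram of $\mathcal{P}$ is the directed graph on $\mathcal{P}$ with an edge $x\to y$ iff $x\lessdot y$. A collider is a set of three distinct elements $a,b,c$ with $a\lessdot c$ and $b\lessdot c$. A cone in $\mathbb{R}^p$ is simplicial if it is the conical hull of $p$ linearly independent vectors. *)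

From HB Require Import structures.
From mathcomp Require Import all_boot all_order all_algebra.
From mathcomp Require Import reals.
Set Implicit Arguments. Unset Strict Implicit. Unset Printing Implicit Defensive.
Import Order.TTheory GRing.Theory Num.Theory.
Local Open Scope order_scope.

Section Defs.
Context {d : Order.disp_t} {T : finPOrderType d}.

Definition covers (x y : T) : Prop :=
  x < y /\ ~ (exists z : T, x < z /\ z < y).

Definition collider (a b c : T) : Prop :=
  [/\ a != b, a != c, b != c, covers a c & covers b c].

Definition has_collider : Prop := exists a b c : T, collider a b c.

Local Open Scope ring_scope.
Context {R : realType}.

Definition order_cone : (T -> R) -> Prop := fun f =>
  (forall x, 0 <= f x) /\ (forall x y : T, (x <= y)%O -> f x <= f y).

Definition lin_indep (n : nat) (v : 'I_n -> T -> R) : Prop :=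
  forall c : 'I_n -> R, (forall x : T, \sum_(i < n) c i * v i x = 0) ->
    forall i, c i = 0.

Definition conical_hull (n : nat) (v : 'I_n -> T -> R) : (T -> R) -> Prop :=
  fun f => exists c : 'I_n -> R, (forall i, 0 <= c i) /\
    (forall x : T, f x = \sum_(i < n) c i * v i x).

Definition simplicial (K : (T -> R) -> Prop) : Prop :=
  exists v : 'I_#|T| -> T -> R, lin_indep v /\
    (forall f, K f <-> conical_hull v f).
End Defs.

From mathcomp Require Import all_boot all_order all_algebra reals.
From mathcomp Require Import lra.
Set Implicit Arguments. Unset Strict Implicit. Unset Printing Implicit Defensive.
Import Order.TTheory GRing.Theory Num.Theory.

(* Without colliders every element y has at most one lower cover, which is
   then the largest element strictly below y, its parent.  Writing u_x for the
   indicator of the principal up-set of x, every f in the order cone is the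
   nonnegative combination of the u_y with coefficients f y - f (parent y)
   (just f y for minimal y), and the u_x are independent because they are
   triangular for the order; so the cone is simplicial.
   Conversely, let a, b be incomparable with a common upper bound c (e.g. a
   collider).  With M and N the indicators of the union and the intersection
   of the up-sets of a and b we have u_a + u_b = M + N.  If the cone were
   spanned by independent generators, pick one, v, occurring in M with a
   positive coefficient.  Both that summand and its complement in M lie in the
   cone, which forces the summand to be constant on the up-set of M, connected
   through c; so v is positive at a and b.  Since u_a vanishes at b and u_b at
   a, v occurs in neither u_a nor u_b, hence not in M + N: contradiction. *)

Section HasseDiagram.
Context {d : Order.disp_t} {T : finPOrderType d}.
Local Open Scope order_scope.

Definition nbelow (y : T) : nat := #|[set z | z < y]|.

Lemma nbelow_lt (z y : T) : z < y -> (nbelow z < nbelow y)%N.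
Proof.
move=> zy; apply: proper_card; apply/properP; split.
  by apply/subsetP => t; rewrite !inE => tz; exact: lt_trans tz zy.
by exists z; rewrite !inE ?ltxx.
Qed.

Lemma lt_ind (P : T -> Prop) :
  (forall y, (forall z, z < y -> P z) -> P y) -> forall y, P y.
Proof.
move=> IH y; elim: (nbelow y).+1 {-2}y (ltnSn (nbelow y)) => // n IHn {}y yn.
by apply: IH => z zy; apply: IHn; exact: leq_trans (nbelow_lt zy) yn.
Qed.

Lemma exists_lower_cover (z y : T) : z < y -> exists2 w : T, z <= w & covers w y.
Proof.
move=> zy; have Qz : [pred u | (z <= u) && (u < y)] z by rewrite inE lexx.
case: (arg_maxnP nbelow Qz) => w /andP[zw wy] wmax.
exists w => //; split=> // [[u [wu uy]]].
have := wmax u; rewrite inE (le_trans zw (ltW wu)) uy => /(_ isT).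
by rewrite /= leqNgt nbelow_lt.
Qed.

Lemma covers_incomparable (a b c : T) :
  a != b -> covers a c -> covers b c -> ~~ (a <= b).
Proof.
move=> nab [_ nz] [bc _]; apply/negP => ab; apply: nz; exists b.
by rewrite lt_neqAle nab ab.
Qed.

Definition parent (y : T) : option T :=
  [pick w | (w < y) && [forall x, (x < y) ==> (x <= w)]].

Variant parent_spec (y : T) : option T -> Prop :=
  | ParentSome p of (forall x, (x < y) = (x <= p)) : parent_spec y (Some p)
  | ParentNone of (forall x, ~~ (x < y)) : parent_spec y None.

Section NoCollider.
Hypothesis no_collider : ~ has_collider (T := T).

Lemma lower_cover_unique (w w' y : T) : covers w y -> covers w' y -> w = w'.
Proof.
move=> wy w'y; case: (eqVneq w w') => // ww'; case: no_collider.
by exists w, w', y; split; rewrite ?(lt_eqF wy.1) ?(lt_eqF w'y.1).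
Qed.

Lemma lt_lower_cover (w y : T) : covers w y -> forall x, (x < y) = (x <= w).
Proof.
move=> wy x; apply/idP/idP => [/exists_lower_cover[w' xw' w'y] | xw].
  by rewrite -(lower_cover_unique w'y wy).
exact: le_lt_trans xw wy.1.
Qed.

Lemma parentP (y : T) : parent_spec y (parent y).
Proof.
rewrite /parent; case: pickP => [p /andP[py /forallP below] | none].
  constructor => x; apply/idP/idP => [|xp]; first exact/implyP/below.
  exact: le_lt_trans xp py.
constructor => x; apply/negP => /exists_lower_cover[w _ wy].
move: (none w) => /negbT/negP; apply; rewrite wy.1; apply/forallP => u.
by rewrite (lt_lower_cover wy) implybb.
Qed.

End NoCollider.
End HasseDiagram.

Section OrderCone.
Context {d : Order.disp_t} {T : finPOrderType d} {R : realType}.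
Local Open Scope ring_scope.

Local Notation order_cone := (@order_cone d T R).

Lemma order_cone_indicator (U : pred T) :
  (forall x y, (x <= y)%O -> U x -> U y) -> order_cone (fun y => (U y)%:R).
Proof.
move=> U_up; split=> [x | x y xy]; first exact: ler0n.
by case Ux: (U x); rewrite ?(U_up _ _ xy Ux) ler_nat.
Qed.

Lemma order_cone_conical_hull n (v : 'I_n -> T -> R) f :
  (forall i, order_cone (v i)) -> conical_hull v f -> order_cone f.
Proof.
move=> vK [c [c0 fE]]; split=> [x | x y xy]; rewrite !fE.
  by apply: sumr_ge0 => i _; apply: mulr_ge0 (c0 i) ((vK i).1 x).
by apply: ler_sum => i _; apply: ler_wpM2l; [exact: c0 | exact: (vK i).2].
Qed.

Lemma order_cone_summand_const (g h : T -> R) x y :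
  order_cone g -> order_cone (fun y => h y - g y) ->
  (x <= y)%O -> h x = h y -> g x = g y.
Proof.
move=> [_ g_mono] [_ hg_mono] xy hxy.
by have := g_mono x y xy; have := hg_mono x y xy; rewrite hxy; lra.
Qed.

Lemma order_cone_summand_eq0 (g h : T -> R) y :
  order_cone g -> order_cone (fun y => h y - g y) -> h y = 0 -> g y = 0.
Proof.
by move=> [g0 _] [hg0 _] hy0; have := g0 y; have := hg0 y; rewrite hy0; lra.
Qed.

Definition up_indicator (x y : T) : R := (x <= y)%O%:R.

Lemma order_cone_up_indicator x : order_cone (up_indicator x).
Proof. by apply: order_cone_indicator => y z yz xy; exact: le_trans xy yz. Qed.

Lemma sum_le_split (F : T -> R) y :
  \sum_(x | (x <= y)%O) F x = F y + \sum_(x | (x < y)%O) F x.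
Proof.
rewrite (bigD1 y) ?lexx //=; congr (_ + _); apply: eq_bigl => x.
by rewrite lt_neqAle andbC.
Qed.

Definition up_basis (i : 'I_#|T|) : T -> R := up_indicator (enum_val i).

Lemma sum_up_basis (c : T -> R) y :
  \sum_(i < #|T|) c (enum_val i) * up_basis i y = \sum_(x | (x <= y)%O) c x.
Proof.
rewrite -(big_enum_val (fun x => c x * up_indicator x y)) [RHS]big_mkcond.
by apply: eq_bigr => x _; rewrite mulr_natr mulrb.
Qed.

Lemma up_basis_lin_indep : lin_indep up_basis.
Proof.
move=> c c_up0; pose c' x := c (enum_rank x).
have sum_c' (y : T) : \sum_(x | (x <= y)%O) c' x = 0.
  rewrite -sum_up_basis -[RHS](c_up0 y); apply: eq_bigr => i _.
  by rewrite /c' enum_valK.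
have c'0 (y : T) : c' y = 0.
  by elim/(@lt_ind _ T): y => y IH; have := sum_c' y; rewrite sum_le_split big1 ?addr0.
by move=> i; rewrite -(enum_valK i); exact: c'0.
Qed.

Definition increment (f : T -> R) (y : T) : R :=
  if parent y is Some p then f y - f p else f y.

Section NoCollider.
Hypothesis no_collider : ~ has_collider (T := T).

Lemma increment_sum f y : f y = \sum_(x | (x <= y)%O) increment f x.
Proof.
elim/(@lt_ind _ T): y => y IH; rewrite sum_le_split {1}/increment.
case: (parentP no_collider y) => [p ltp | nolt].
  by rewrite (eq_bigl _ _ ltp) -IH ?ltp // subrK.
by rewrite big_pred0 ?addr0 // => x; exact/negbTE/nolt.
Qed.

Lemma increment_ge0 f : order_cone f -> forall y, 0 <= increment f y.
Proof.
move=> [f0 f_mono] y; rewrite /increment.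
by case: (parentP no_collider y) => // p ltp; rewrite subr_ge0 f_mono // ltW // ltp.
Qed.

Lemma order_cone_up_basis f : order_cone f <-> conical_hull up_basis f.
Proof.
split=> [fK | ]; last first.
  by apply: order_cone_conical_hull => i; exact: order_cone_up_indicator.
exists (fun i => increment f (enum_val i)); split => [i | y].
  exact: increment_ge0.
by rewrite sum_up_basis; exact: increment_sum.
Qed.

End NoCollider.

Lemma no_collider_simplicial : ~ has_collider (T := T) -> simplicial order_cone.
Proof.
move=> no_collider; exists up_basis; split; first exact: up_basis_lin_indep.
exact: order_cone_up_basis.
Qed.

Section Coordinates.
Variables (n : nat) (v : 'I_n -> T -> R).

Lemma conical_hull_coord_pos (phi : 'I_n -> R) f y :
  (forall i, 0 <= phi i) -> (forall x, f x = \sum_(i < n) phi i * v i x) ->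
  f y != 0 -> exists k, 0 < phi k.
Proof.
move=> phi0 fE; case: (pickP (fun k => 0 < phi k)) => [k | phi_le0 fy].
  by exists k.
move: fy; rewrite fE big1 ?eqxx // => i _.
have phi_i0 : phi i = 0 by apply/eqP; rewrite eq_le phi0 andbT leNgt (phi_le0 i).
by rewrite phi_i0 mul0r.
Qed.

Hypothesis v_indep : lin_indep v.

Lemma lin_indep_coord_eq (al be : 'I_n -> R) :
  (forall x, \sum_(i < n) al i * v i x = \sum_(i < n) be i * v i x) ->
  forall i, al i = be i.
Proof.
move=> E i; apply/eqP; rewrite -subr_eq0; apply/eqP.
apply: (@v_indep (fun j => al j - be j)) => x.
by under eq_bigr do rewrite mulrBl; rewrite sumrB E subrr.
Qed.

Lemma lin_indep_scale_eq0 k s : (forall x, s * v k x = 0) -> s = 0.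
Proof.
move=> sv0; suff /(_ k) : forall i, (if i == k then s else 0) = 0 by rewrite eqxx.
apply: v_indep => x; rewrite (bigD1 k) //= eqxx big1 ?addr0 ?sv0 // => i /negbTE->.
by rewrite mul0r.
Qed.

Variable K : (T -> R) -> Prop.
Hypothesis K_hull : forall f, K f <-> conical_hull v f.

Lemma conical_hull_summands (phi : 'I_n -> R) f k :
  (forall i, 0 <= phi i) -> (forall x, f x = \sum_(i < n) phi i * v i x) ->
  K (fun x => phi k * v k x) /\ K (fun x => f x - phi k * v k x).
Proof.
move=> phi0 fE; split; apply/K_hull.
  exists (fun i => if i == k then phi k else 0); split => [i | x].
    by case: eqP.
  by rewrite (bigD1 k) //= eqxx big1 ?addr0 // => i /negbTE->; rewrite mul0r.
exists (fun i => if i == k then 0 else phi i); split => [i | x].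
  by case: eqP.
rewrite fE (bigD1 k) //= [in RHS](bigD1 k) //= eqxx mul0r add0r addrAC subrr add0r.
by apply: eq_bigr => i /negbTE->.
Qed.

End Coordinates.

Lemma order_cone_coord_eq0 n (v : 'I_n -> T -> R) (phi : 'I_n -> R) f k y :
  (forall f, order_cone f <-> conical_hull v f) ->
  (forall i, 0 <= phi i) -> (forall x, f x = \sum_(i < n) phi i * v i x) ->
  f y = 0 -> 0 < v k y -> phi k = 0.
Proof.
move=> cone_hull phi0 fE fy0 vky.
have [_ [rest0 _]] := conical_hull_summands cone_hull k phi0 fE.
have := rest0 y; rewrite fy0 sub0r oppr_ge0 pmulr_lle0 // => phik_le0.
by apply/le_anti; rewrite phik_le0 phi0.
Qed.

Section IncomparablePair.
Variables a b c : T.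
Hypotheses (nab : ~~ (a <= b)%O) (nba : ~~ (b <= a)%O).
Hypotheses (ac : (a <= c)%O) (bc : (b <= c)%O).

Definition up_join (y : T) : R := ((a <= y) || (b <= y))%O%:R.
Definition up_meet (y : T) : R := ((a <= y) && (b <= y))%O%:R.

Lemma order_cone_up_join : order_cone up_join.
Proof.
apply: order_cone_indicator => x y xy /orP[ax | bx].
  by rewrite (le_trans ax xy).
by rewrite (le_trans bx xy) orbT.
Qed.

Lemma order_cone_up_meet : order_cone up_meet.
Proof.
apply: order_cone_indicator => x y xy /andP[ax bx].
by rewrite (le_trans ax xy) (le_trans bx xy).
Qed.

Lemma up_indicatorD y : up_indicator a y + up_indicator b y = up_join y + up_meet y.
Proof.
rewrite /up_indicator /up_join /up_meet.
by case: (a <= y)%O; case: (b <= y)%O; rewrite ?addr0 ?add0r.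
Qed.

(* The up-set of [a] and [b] is connected through [c], so a summand of its
   indicator is constant on it. *)
Lemma up_join_summand g :
  order_cone g -> order_cone (fun y => up_join y - g y) ->
  forall y, g y = g c * up_join y.
Proof.
move=> gK hK.
have const (x y : T) : (x <= y)%O -> ((a <= x) || (b <= x))%O -> g x = g y.
  move=> xy abx; have aby : ((a <= y) || (b <= y))%O.
    by case/orP: abx => h; rewrite (le_trans h xy) ?orbT.
  by apply: (order_cone_summand_const gK hK xy); rewrite /up_join abx aby.
move=> y; case: (boolP ((a <= y) || (b <= y))%O) => [/orP[ay | by_] | nab_y].
- by rewrite /up_join ay mulr1 -(const a y) ?lexx // (const a c) ?lexx.
- rewrite /up_join by_ orbT mulr1 -(const b y) ?lexx ?orbT //.
  by rewrite (const b c) ?lexx ?orbT.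
- rewrite /up_join (negbTE nab_y) mulr0.
  by apply: order_cone_summand_eq0 gK hK _; rewrite /up_join (negbTE nab_y).
Qed.

Lemma up_join_generator_pos n (v : 'I_n -> T -> R) (mu : 'I_n -> R) k :
  lin_indep v -> (forall f, order_cone f <-> conical_hull v f) ->
  (forall i, 0 <= mu i) -> (forall x, up_join x = \sum_(i < n) mu i * v i x) ->
  0 < mu k -> forall y, ((a <= y) || (b <= y))%O -> 0 < v k y.
Proof.
move=> v_indep cone_hull mu0 joinE muk y ab_y.
have [gK hK] := conical_hull_summands cone_hull k mu0 joinE.
have gE x : mu k * v k x = mu k * v k c * up_join x := up_join_summand gK hK x.
have gc_pos : 0 < mu k * v k c.
  rewrite lt_def (gK.1 c) andbT; apply: contraTneq muk => gc0.
  rewrite (lin_indep_scale_eq0 v_indep (k := k) (s := mu k)) ?ltxx // => x.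
  by rewrite gE gc0 mul0r.
by rewrite -(pmulr_rgt0 _ muk) gE /up_join ab_y mulr1.
Qed.

Lemma incomparable_bounded_not_simplicial : ~ simplicial order_cone.
Proof.
move=> [v [v_indep cone_hull]].
have [al [al0 aE]] := (cone_hull _).1 (order_cone_up_indicator a).
have [be [be0 bE]] := (cone_hull _).1 (order_cone_up_indicator b).
have [mu [mu0 joinE]] := (cone_hull _).1 order_cone_up_join.
have [nu [nu0 meetE]] := (cone_hull _).1 order_cone_up_meet.
have coordE : forall i, al i + be i = mu i + nu i.
  apply: (lin_indep_coord_eq v_indep) => x.
  under eq_bigr do rewrite mulrDl; under [RHS]eq_bigr do rewrite mulrDl.
  by rewrite !big_split /= -aE -bE -joinE -meetE up_indicatorD.
have [k muk] : exists k, 0 < mu k.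
  by apply: (conical_hull_coord_pos mu0 joinE (y := c)); rewrite /up_join ac oner_eq0.
have vk_pos := up_join_generator_pos v_indep cone_hull mu0 joinE muk.
have alk : al k = 0.
  apply: (order_cone_coord_eq0 cone_hull al0 aE (y := b)).
    by rewrite /up_indicator (negbTE nab).
  by apply: vk_pos; rewrite lexx orbT.
have bek : be k = 0.
  apply: (order_cone_coord_eq0 cone_hull be0 bE (y := a)).
    by rewrite /up_indicator (negbTE nba).
  by apply: vk_pos; rewrite lexx.
by have := coordE k; have := nu0 k; rewrite alk bek; lra.
Qed.

End IncomparablePair.
End OrderCone.

Theorem theorem2 (d : Order.disp_t) (T : finPOrderType d) (R : realType) :
  simplicial (@order_cone d T R) <-> ~ has_collider (T := T).
Proof.
split=> [simp [a [b [c [nab _ _ ac bc]]]] | ]; last exact: no_collider_simplicial.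
apply: (incomparable_bounded_not_simplicial _ _ (ltW ac.1) (ltW bc.1) simp).
  exact: covers_incomparable ac bc.
by apply: covers_incomparable bc ac; rewrite eq_sym.
Qed.
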